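(* Let $f\in\mathbb Z[x]$ be an irreducible polynomial and $\beta$ a root of $f$, and let $P$ be a non-archimedean prime divisor of $\mathbb Q(\beta)$ which is stable. If $g\in O_P[x)$ satisfies $e_P(g)=0$, then $g$ is divisible by $\beta-x$ in $O_P[x)$, i.e. $g=(\beta-x)h$ for some $h\in O_P[x)$.
   Context: A prime divisor $P$ of $\mathbb Q(\beta)$ (an equivalence class of nontrivial absolute values) is stable if $\beta^n\to0$ as $n\to\infty$ in the $P$-topology. $O_P\subset\mathbb Q(\beta)$ is the ring of elements of $P$-absolute value at most $1$, and $K_P$ the completion of $\mathbb Q(\beta)$ at $P$. $O_P[x)$ denotes formal series $\sum_{n\ge m}a_nx^n$, $a_n\in O_P$. For stable $P$, $e_P:O_P[x)\to K_P$ is the evaluation map $\sum a_nx^n\mapsto\sum a_n\beta^n$ (convergent in $K_P$). *)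

From HB Require Import structures.
From mathcomp Require Import all_boot all_order all_algebra.
From mathcomp Require Import reals.
Set Implicit Arguments. Unset Strict Implicit. Unset Printing Implicit Defensive.
Import Order.TTheory GRing.Theory Num.Theory.
Local Open Scope ring_scope.

(* K together with beta is a model of Q(beta): characteristic 0 and every
   element is a rational polynomial expression in beta. *)
Definition generated_by (K : fieldType) (beta : K) : Prop :=
  forall x : K, exists p : {poly rat}, x = (map_poly ratr p).[beta].

(* A non-archimedean (nontrivial) absolute value on K, real valued;
   it is a representative of the prime divisor P. *)
Definition nonarch_absval (K : fieldType) (R : realType) (v : K -> R) : Prop :=
  [/\ forall x, 0 <= v x,
      forall x, v x = 0 <-> x = 0,
      forall x y, v (x * y) = v x * v y,
      forall x y, v (x + y) <= Num.max (v x) (v y)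
    & exists x, x != 0 /\ v x != 1].

Definition stable (K : fieldType) (R : realType) (v : K -> R) (beta : K) : Prop :=
  forall e : R, 0 < e -> exists N : nat, forall n : nat, (N <= n)%N -> v (beta ^+ n) < e.

(* Formal Laurent series sum_{n >= m} a_n x^n are functions int -> K
   vanishing below some index m. *)
Definition supported_from (K : fieldType) (a : int -> K) (m : int) : Prop :=
  forall n : int, n < m -> a n = 0.

Definition in_OP (K : fieldType) (R : realType) (v : K -> R) (a : int -> K) : Prop :=
  forall n : int, v (a n) <= 1.

Definition OP_laurent (K : fieldType) (R : realType) (v : K -> R) (a : int -> K) : Prop :=
  in_OP v a /\ exists m : int, supported_from a m.

Definition psum (K : fieldType) (a : int -> K) (beta : K) (m : int) (N : nat) : K :=
  \sum_(k < N) a (m + k%:Z) * beta ^ (m + k%:Z).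

(* e_P(a) = 0 : the partial sums converge to 0 in K_P, i.e. their
   P-absolute values tend to 0 (K embeds isometrically in K_P). *)
Definition evalP_zero (K : fieldType) (R : realType) (v : K -> R) (beta : K)
  (a : int -> K) : Prop :=
  exists m : int, supported_from a m /\
    forall e : R, 0 < e -> exists N : nat, forall n : nat, (N <= n)%N ->
      v (psum a beta m n) < e.

(* If the partial sums H_n = sum_(k <= n) g_k beta^k tend to 0, then by the
   ultrametric inequality |H_n| is bounded by the tail sum_(k > n) g_k beta^k,
   hence by |beta|^(n+1) (coefficients and beta are integral: |beta| <= 1 by
   stability).  So h_n := H_n / beta^(n+1) is integral, and telescoping gives
   beta h_n - h_(n-1) = (H_n - H_(n-1)) / beta^n = g_n.  Only the absolute
   value and stability are used.  For beta = 0 the quotient is the shift h_n = - g_(n+1). *)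

From HB Require Import structures.
From mathcomp Require Import all_boot all_order all_algebra.
From mathcomp Require Import reals.
From mathcomp Require Import zify ring lra.
Set Implicit Arguments. Unset Strict Implicit. Unset Printing Implicit Defensive.
Import Order.TTheory GRing.Theory Num.Theory.
Local Open Scope ring_scope.

Section NonarchAbsval.
Variables (K : fieldType) (R : realType) (v : K -> R).
Hypothesis v_absval : nonarch_absval v.

Lemma absv_ge0 x : 0 <= v x.  Proof. by case: v_absval. Qed.
Lemma absv_eq0 x : v x = 0 <-> x = 0.  Proof. by case: v_absval. Qed.
Lemma absvM x y : v (x * y) = v x * v y.  Proof. by case: v_absval. Qed.
Lemma absvD_le x y : v (x + y) <= Num.max (v x) (v y).  Proof. by case: v_absval. Qed.

Lemma absv0 : v 0 = 0.  Proof. exact/absv_eq0. Qed.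

Lemma absv_gt0 x : x != 0 -> 0 < v x.
Proof. by move=> x0; rewrite lt_def absv_ge0 andbT; apply: contra x0 => /eqP/absv_eq0 ->. Qed.

Lemma absv1 : v 1 = 1.
Proof.
have := absvM 1 1; rewrite mulr1.
have := absv_gt0 (oner_neq0 K); nra.
Qed.

Lemma absvN x : v (- x) = v x.
Proof.
have vN1 : v (-1) = 1.
  have := absvM (-1) (-1); rewrite mulrNN mulr1 absv1.
  have := absv_ge0 (-1); nra.
by rewrite -mulN1r absvM vN1 mul1r.
Qed.

Lemma absvXn x n : v (x ^+ n) = v x ^+ n.
Proof. by elim: n => [|n IH]; rewrite ?expr0 ?absv1 // !exprS absvM IH. Qed.

Lemma absvV x : v x^-1 = (v x)^-1.
Proof.
have [->|x0] := eqVneq x 0; first by rewrite invr0 absv0 invr0.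
have vx0 := lt0r_neq0 (absv_gt0 x0).
by apply: (mulfI vx0); rewrite -absvM !mulfV // absv1.
Qed.

Lemma absv_le_max_sub x y : v x <= Num.max (v y) (v (y - x)).
Proof. by rewrite -(absvN (y - x)); apply: le_trans (absvD_le _ _); rewrite opprB addrC subrK. Qed.

Lemma absv_sum_le n (F : 'I_n -> K) c : 0 <= c -> (forall i, v (F i) <= c) ->
  v (\sum_(i < n) F i) <= c.
Proof.
move=> c_ge0 F_le; apply: (big_ind (fun x => v x <= c)) => //; first by rewrite absv0.
by move=> x y vx vy; apply: le_trans (absvD_le x y) _; rewrite ge_max vx vy.
Qed.

Lemma stable_absv_le1 beta : stable v beta -> v beta <= 1.
Proof.
move=> /(_ 1 ltr01) [N /(_ N.+1 (leqnSn N))]; rewrite absvXn.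
by apply: contraTT; rewrite -ltNge -leNgt => /ltW /(exprn_ege1 N.+1).
Qed.

Lemma absv_expzD_le beta (j : int) (d : nat) : beta != 0 -> v beta <= 1 ->
  v (beta ^ (j + d%:Z)) <= v (beta ^ j).
Proof.
move=> beta0 beta_le1; rewrite exprzDr ?unitfE // absvM -[leRHS]mulr1.
by rewrite ler_wpM2l ?absv_ge0 // absvXn exprn_ile1 ?absv_ge0.
Qed.

End NonarchAbsval.

Section LaurentHead.
Variables (K : fieldType) (beta : K) (a : int -> K) (m : int).

Definition laurent_head (n : int) : K :=
  if n < m then 0 else psum a beta m `|n - m|%N.+1.

Lemma laurent_head_lt n : n < m -> laurent_head n = 0.
Proof. by rewrite /laurent_head => ->. Qed.

Lemma laurent_head_shift (k : nat) : laurent_head (m + k%:Z) = psum a beta m k.+1.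
Proof.
rewrite /laurent_head ifF; last by apply/negbTE; rewrite -leNgt; lia.
by congr (psum _ _ _ _.+1); lia.
Qed.

Lemma psum_split k l : psum a beta m (k + l) =
  psum a beta m k + \sum_(i < l) a (m + (k + i)%N%:Z) * beta ^ (m + (k + i)%N%:Z).
Proof. by rewrite /psum big_split_ord. Qed.

Hypothesis a_supp : supported_from a m.

Lemma laurent_headD1 n : laurent_head n = laurent_head (n - 1) + a n * beta ^ n.
Proof.
have [n_lt_m|m_le_n] := ltrP n m.
  by rewrite !laurent_head_lt ?a_supp ?mul0r ?addr0 //; lia.
have -> : n = m + `|n - m|%N%:Z by lia.
case: `|n - m|%N => [|k].
  rewrite laurent_head_shift laurent_head_lt; last by lia.
  by rewrite /psum big_ord1 add0r addr0.
have -> : m + k.+1%:Z - 1 = m + k%:Z by lia.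
by rewrite !laurent_head_shift /psum big_ord_recr.
Qed.

Definition laurent_quotient (n : int) : K := laurent_head n / beta ^ (n + 1).

Lemma laurent_quotient_supported : supported_from laurent_quotient m.
Proof. by move=> n n_lt_m; rewrite /laurent_quotient laurent_head_lt ?mul0r. Qed.

Hypothesis beta0 : beta != 0.

Lemma laurent_quotient_rec n : a n = beta * laurent_quotient n - laurent_quotient (n - 1).
Proof.
rewrite /laurent_quotient subrK (laurent_headD1 n) exprzDr ?unitfE // expr1z.
by field; rewrite expfz_neq0 ?beta0.
Qed.

End LaurentHead.

Section LaurentHeadBound.
Variables (K : fieldType) (R : realType) (v : K -> R) (beta : K) (a : int -> K) (m : int).
Hypotheses (v_absval : nonarch_absval v) (beta0 : beta != 0) (beta_le1 : v beta <= 1).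
Hypothesis a_OP : in_OP v a.

Lemma absv_psum_tail k l :
  v (psum a beta m (k + l) - psum a beta m k) <= v (beta ^ (m + k%:Z)).
Proof.
rewrite psum_split addrC addKr.
apply: absv_sum_le => // [|i]; first exact: absv_ge0.
rewrite absvM // -[leRHS]mul1r ler_pM ?absv_ge0 //.
have -> : m + (k + i)%N%:Z = m + k%:Z + i%:Z by lia.
exact: absv_expzD_le.
Qed.

Hypothesis psum_to0 : forall e : R, 0 < e ->
  exists N : nat, forall n : nat, (N <= n)%N -> v (psum a beta m n) < e.

Lemma absv_laurent_head_le n : v (laurent_head beta a m n) <= v (beta ^ (n + 1)).
Proof.
have [n_lt_m|m_le_n] := ltrP n m.
  by rewrite laurent_head_lt // absv0 // absv_ge0.
have -> : n = m + `|n - m|%N%:Z by lia.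
rewrite laurent_head_shift; set k := `|n - m|%N; set x := psum a beta m k.+1.
have -> : m + k%:Z + 1 = m + k.+1%:Z by lia.
(* A far partial sum y and the tail y - x would both be smaller than x. *)
rewrite leNgt; apply/negP => c_lt_x.
have x_gt0 := le_lt_trans (absv_ge0 v_absval _) c_lt_x.
have [N /(_ (k.+1 + N)%N (leq_addl _ _)) y_lt_x] := psum_to0 x_gt0.
have tail_lt_x := le_lt_trans (absv_psum_tail k.+1 N) c_lt_x.
have := absv_le_max_sub v_absval x (psum a beta m (k.+1 + N)).
by rewrite le_max !leNgt y_lt_x tail_lt_x.
Qed.

Lemma in_OP_laurent_quotient : in_OP v (laurent_quotient beta a m).
Proof.
move=> n; rewrite /laurent_quotient absvM // absvV // ler_pdivrMr ?mul1r.
  exact: absv_laurent_head_le.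
by rewrite absv_gt0 // expfz_neq0.
Qed.

End LaurentHeadBound.

Theorem mainTheorem8 (K : fieldType) (R : realType) (f : {poly int}) (beta : K)
  (v : K -> R) :
  irreducible_poly f ->
  root (map_poly intr f) beta ->
  [pchar K] =i pred0 ->
  generated_by beta ->
  nonarch_absval v ->
  stable v beta ->
  forall g : int -> K, OP_laurent v g -> evalP_zero v beta g ->
  exists h : int -> K, OP_laurent v h /\
    forall n : int, g n = beta * h n - h (n - 1).
Proof.
move=> _ _ _ _ v_absval beta_stable g [g_OP _] [m [g_supp g_to0]].
have [->|beta0] := eqVneq beta 0.
  exists (fun n => - g (n + 1)); split; last first.
    by move=> n; rewrite mul0r sub0r opprK subrK.
  split=> [n|]; first by rewrite absvN.
  by exists (m - 1) => n n_lt; rewrite g_supp ?oppr0 //; lia.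
exists (laurent_quotient beta g m); split; last exact: laurent_quotient_rec.
split; last by exists m; exact: laurent_quotient_supported.
exact: (in_OP_laurent_quotient v_absval beta0 (stable_absv_le1 v_absval beta_stable) g_OP g_to0).
Qed.
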